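(* For $\epsilon \in [0,1]$, let $F_\epsilon$ be the solution of $$F_\epsilon''(t) = (\epsilon - 3Q(t)^2)F_\epsilon(t), \quad t > 0, \qquad F_\epsilon(0) = 0,\ F_\epsilon'(0) = -1.$$ Then $F_\epsilon$ changes its sign at least once on $(0,\infty)$. Moreover, its first positive zero $t_\epsilon$ satisfies $t_\epsilon \ge t_0 > 0$, where $t_0$ is the first positive zero of $F_0$ (the solution for $\epsilon = 0$).
   Context: $Q(t)$, $t\ge 0$, denotes the radial profile of the positive radial ground state of $\Delta\phi - \phi + |\phi|^2\phi = 0$ on $\mathbb{R}^3$; it solves $-Q'' - \frac{2}{t}Q' + Q - Q^3 = 0$. *)

From Stdlib Require Import Reals Lra.
Open Scope R_scope.

(* Q is the radial profile of the positive radial ground state of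
   Delta phi - phi + phi^3 = 0 on R^3: a positive solution on [0,oo) of
   Q'' + (2/t) Q' - Q + Q^3 = 0 (t > 0), regular at the origin
   (Q continuous at 0+, Q'(0+) = 0) and decaying to 0 at infinity.
   By uniqueness of the ground state (Coffman, Kwong) these properties
   determine Q.  Values of Q for t < 0 are irrelevant. *)
Definition ground_state_profile (Q : R -> R) : Prop :=
  (forall t, 0 <= t -> 0 < Q t) /\
  exists dQ : R -> R,
    (forall t, 0 < t -> derivable_pt_lim Q t (dQ t)) /\
    (forall t, 0 < t ->
       derivable_pt_lim dQ t (- (2 / t) * dQ t + Q t - Q t ^ 3)) /\
    (forall e, 0 < e -> exists d, 0 < d /\
       forall t, 0 < t < d -> Rabs (Q t - Q 0) < e /\ Rabs (dQ t) < e) /\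
    (forall e, 0 < e -> exists M, forall t, M < t -> Rabs (Q t) < e).

Definition F_solution (Q : R -> R) (eps : R) (F : R -> R) : Prop :=
  exists dF : R -> R,
    (forall t, 0 <= t -> derivable_pt_lim F t (dF t)) /\
    (forall t, 0 < t ->
       derivable_pt_lim dF t ((eps - 3 * Q t ^ 2) * F t)) /\
    F 0 = 0 /\ dF 0 = -1.

Definition first_pos_zero (f : R -> R) (t : R) : Prop :=
  0 < t /\ f t = 0 /\ forall s, 0 < s < t -> f s <> 0.

(* Let r = (tQ)' = Q + tQ' and p = t r.  Since r(0+) = Q(0) > 0 while Q decays, r has a
   first zero z, so p > 0 on (0, z) and p(z) = 0.  As p'' = (1 - 3Q^2) p + 2tQ, the Wronskian
   F p' - F' p, which vanishes at 0+, would decrease strictly on (0, z] if F stayed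
   nonpositive, yet it equals p'(z) F(z) >= 0 at z.  So F changes sign and has a first zero;
   Sturm comparison of F'' = (eps - 3Q^2) F with F0'' = -3Q^2 F0 then shows that F0
   vanishes no later than F. *)

From Stdlib Require Import Reals Lra Psatz Classical.
Open Scope R_scope.

Local Notation lim_at_0_right f l := (limit1_in f (fun s => 0 < s) l 0).

Definition bounded_near_0 (f : R -> R) : Prop :=
  exists d B, 0 < d /\ forall s, 0 < s < d -> Rabs (f s) <= B.

Lemma derivable_pt_lim_eq_l f x l l' :
  derivable_pt_lim f x l -> l = l' -> derivable_pt_lim f x l'.
Proof. now intros H <-. Qed.

Lemma derivable_pt_lim_continuity_pt f x l :
  derivable_pt_lim f x l -> continuity_pt f x.
Proof. intros H. exact (derivable_continuous_pt f x (exist _ l H)). Qed.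

Lemma deriv_lower_bound f f' c a b : a <= b ->
  (forall s, a <= s <= b -> derivable_pt_lim f s (f' s)) ->
  (forall s, a < s < b -> c <= f' s) -> f a + c * (b - a) <= f b.
Proof.
  intros Hab Hd Hc. destruct (Rle_lt_or_eq_dec a b Hab) as [Hlt | <-]; [| lra].
  destruct (MVT_cor2 f f' a b Hlt Hd) as [s [Hs Hsab]].
  specialize (Hc s Hsab). nra.
Qed.

Lemma nondecr_of_deriv_nonneg f f' a b : a <= b ->
  (forall s, a <= s <= b -> derivable_pt_lim f s (f' s)) ->
  (forall s, a < s < b -> 0 <= f' s) -> f a <= f b.
Proof.
  intros Hab Hd Hs. pose proof (deriv_lower_bound f f' 0 a b Hab Hd Hs). lra.
Qed.

Lemma incr_of_deriv_pos f f' a b : a < b ->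
  (forall s, a <= s <= b -> derivable_pt_lim f s (f' s)) ->
  (forall s, a < s < b -> 0 < f' s) -> f a < f b.
Proof.
  intros Hab Hd Hs. destruct (MVT_cor2 f f' a b Hab Hd) as [s [Hs' Hsab]].
  specialize (Hs s Hsab). nra.
Qed.

Lemma limit1_in_pos_near f D l x0 : limit1_in f D l x0 -> 0 < l ->
  exists d, 0 < d /\ forall x, D x -> Rabs (x - x0) < d -> 0 < f x.
Proof.
  intros Hf Hl. destruct (Hf l Hl) as [d [Hd H]]. exists d. split; [lra |].
  intros x Dx Hx. specialize (H x (conj Dx Hx)). simpl in H; unfold R_dist in H.
  apply Rabs_def2 in H. lra.
Qed.

Lemma limit_pow f D l x0 n : limit1_in f D l x0 ->
  limit1_in (fun x => f x ^ n) D (l ^ n) x0.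
Proof.
  intros Hf. induction n as [| n IH]; simpl.
  - exact (limit_free (fun _ => 1) D x0 x0).
  - exact (limit_mul _ _ _ _ _ _ Hf IH).
Qed.

Lemma lim_at_0_right_spec f l : lim_at_0_right f l <->
  forall e, 0 < e -> exists d, 0 < d /\ forall t, 0 < t < d -> Rabs (f t - l) < e.
Proof.
  split; intros H e He; destruct (H e He) as [d [Hd Hf]]; exists d; split; auto.
  - intros t Ht. apply (Hf t). simpl; unfold R_dist.
    rewrite Rminus_0_r, Rabs_pos_eq; lra.
  - intros t [Ht Htd]. simpl in *; unfold R_dist in *.
    rewrite Rminus_0_r, Rabs_pos_eq in Htd by lra. auto.
Qed.

Lemma lim_at_0_right_of_continuity f : continuity_pt f 0 -> lim_at_0_right f (f 0).
Proof.
  intros H. apply (limit1_imp f (D_x no_cond 0)); [| exact H].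
  intros x Hx. split; [exact I | lra].
Qed.

Lemma lim_at_0_right_bounded f l : lim_at_0_right f l -> bounded_near_0 f.
Proof.
  rewrite lim_at_0_right_spec. intros H. destruct (H 1 Rlt_0_1) as [d [Hd Hf]].
  exists d, (Rabs l + 1). split; [exact Hd |]. intros s Hs.
  pose proof (Rabs_triang (f s - l) l) as Htri. specialize (Hf s Hs).
  replace (f s - l + l) with (f s) in Htri by ring. lra.
Qed.

Lemma lim_at_0_right_mul_bounded f g : bounded_near_0 f -> lim_at_0_right g 0 ->
  lim_at_0_right (fun s => f s * g s) 0.
Proof.
  intros [d [B [Hd Hf]]]. rewrite !lim_at_0_right_spec. intros Hg e He.
  assert (HB : 0 < Rabs B + 1) by (pose proof (Rabs_pos B); lra).
  destruct (Hg (e / (Rabs B + 1))) as [d' [Hd' Hgd]]; [apply Rdiv_lt_0_compat; lra |].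
  exists (Rmin d d'). split; [apply Rmin_pos; lra |]. intros t Ht.
  pose proof (Rmin_l d d'). pose proof (Rmin_r d d').
  specialize (Hf t ltac:(lra)). specialize (Hgd t ltac:(lra)).
  rewrite Rminus_0_r in *. rewrite Rabs_mult.
  pose proof (Rle_abs B). pose proof (Rabs_pos (f t)). pose proof (Rabs_pos (g t)).
  assert (Rabs (g t) * (Rabs B + 1) < e).
  { apply (Rmult_lt_compat_r (Rabs B + 1)) in Hgd; [| lra].
    unfold Rdiv in Hgd. rewrite Rmult_assoc, Rinv_l, Rmult_1_r in Hgd; lra. }
  nra.
Qed.

Lemma bounded_near_0_of_deriv f f' :
  (forall t, 0 < t -> derivable_pt_lim f t (f' t)) ->
  bounded_near_0 f' -> bounded_near_0 f.
Proof.
  intros Hf [d [B [Hd Hb]]]. exists (d / 2), (Rabs (f (d / 2)) + B * d).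
  split; [lra |]. intros s Hs.
  destruct (MVT_cor2 f f' s (d / 2)) as [c [Hc Hcs]]; [lra | intros c Hc; apply Hf; lra |].
  specialize (Hb c ltac:(lra)). pose proof (Rabs_pos (f' c)).
  replace (f s) with (f (d / 2) + - (f' c * (d / 2 - s))) by lra.
  eapply Rle_trans; [apply Rabs_triang |].
  rewrite Rabs_Ropp, Rabs_mult, (Rabs_pos_eq (d / 2 - s)) by lra. nra.
Qed.

Lemma neg_near_0_of_deriv_neg F l : F 0 = 0 -> derivable_pt_lim F 0 l -> l < 0 ->
  exists a, 0 < a /\ forall t, 0 < t < a -> F t < 0.
Proof.
  intros F_0 HF Hl.
  pose proof (limit_Ropp _ _ _ _ (uniqueness_step2 F 0 l HF)) as Hq.
  destruct (limit1_in_pos_near _ _ _ _ Hq ltac:(lra)) as [a [Ha Hpos]].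
  exists a. split; [exact Ha |]. intros t Ht.
  specialize (Hpos t ltac:(lra) ltac:(rewrite Rminus_0_r, Rabs_pos_eq; lra)).
  rewrite Rplus_0_l, F_0, Rminus_0_r in Hpos.
  replace (F t) with (F t / t * t) by (field; lra). nra.
Qed.

Lemma deriv_nonpos_at_first_zero p z l : 0 < z -> derivable_pt_lim p z l -> p z = 0 ->
  (forall t, 0 < t < z -> 0 < p t) -> l <= 0.
Proof.
  intros Hz Hp Hpz Hpos. apply Rnot_lt_le. intros Hl.
  destruct (limit1_in_pos_near _ _ _ _ (uniqueness_step2 p z l Hp) Hl) as [d [Hd Hq]].
  pose proof (Rmin_l d z). pose proof (Rmin_r d z).
  assert (0 < Rmin d z) by (apply Rmin_pos; lra).
  set (h := - (Rmin d z / 2)).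
  specialize (Hq h ltac:(unfold h; lra)
                   ltac:(unfold h; rewrite Rminus_0_r, Rabs_Ropp, Rabs_pos_eq; lra)).
  specialize (Hpos (z + h) ltac:(unfold h; lra)).
  rewrite Hpz, Rminus_0_r in Hq.
  assert (/ h < 0) by (apply Rinv_lt_0_compat; unfold h; lra).
  unfold Rdiv in Hq. nra.
Qed.

Lemma continuity_pt_pos_near g z : continuity_pt g z -> 0 < g z ->
  exists d, 0 < d /\ forall x, Rabs (x - z) < d -> 0 < g x.
Proof.
  intros Hg Hgz. destruct (limit1_in_pos_near _ _ _ _ Hg Hgz) as [d [Hd H]].
  exists d. split; [exact Hd |]. intros x Hx.
  destruct (Req_dec z x) as [<- | Hne]; [exact Hgz |].
  exact (H x (conj I Hne) Hx).
Qed.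

Lemma first_zero_of_sign_change g a s : 0 < a -> 0 < s ->
  (forall t, 0 < t -> continuity_pt g t) ->
  (forall t, 0 < t < a -> 0 < g t) -> g s <= 0 ->
  exists z, 0 < z <= s /\ g z = 0 /\ forall t, 0 < t < z -> 0 < g t.
Proof.
  intros Ha Hs Hg Hpos Hgs.
  set (E := fun x => 0 < x <= s /\ forall t, 0 < t < x -> 0 < g t).
  pose proof (Rmin_l a s). pose proof (Rmin_r a s).
  assert (0 < Rmin a s) by (apply Rmin_pos; lra).
  assert (HEa : E (Rmin a s)).
  { split; [lra |]. intros t Ht. apply Hpos. lra. }
  assert (Hbound : bound E) by (exists s; intros x [Hx _]; lra).
  destruct (completeness E Hbound (ex_intro _ _ HEa)) as [z [Hub Hlub]].
  assert (Hz : 0 < z <= s).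
  { specialize (Hub _ HEa). split; [lra |]. apply Hlub. intros x [Hx _]; lra. }
  assert (Hbelow : forall t, 0 < t < z -> 0 < g t).
  { intros t Ht. apply Rnot_le_lt. intros Hgt.
    assert (Ht_ub : is_upper_bound E t).
    { intros x [_ Hx]. apply Rnot_lt_le. intros Htx. specialize (Hx t ltac:(lra)). lra. }
    specialize (Hlub t Ht_ub). lra. }
  exists z. split; [exact Hz |]. split; [| exact Hbelow].
  destruct (Rtotal_order (g z) 0) as [Hneg | [Hzero | Hposz]]; [exfalso | exact Hzero | exfalso].
  - destruct (continuity_pt_pos_near (fun x => - g x) z
                (continuity_pt_opp _ _ (Hg z ltac:(lra))) ltac:(lra)) as [d [Hd Hnear]].
    pose proof (Rmax_l (z - d / 2) (z / 2)). pose proof (Rmax_r (z - d / 2) (z / 2)).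
    set (t := Rmax (z - d / 2) (z / 2)) in *.
    assert (t < z) by (apply Rmax_lub_lt; lra).
    specialize (Hnear t ltac:(rewrite Rabs_left; lra)). specialize (Hbelow t ltac:(lra)). lra.
  - assert (Hzs : z < s) by (destruct (Req_dec z s) as [-> |]; lra).
    destruct (continuity_pt_pos_near g z (Hg z ltac:(lra)) Hposz) as [d [Hd Hnear]].
    pose proof (Rmin_l (z + d / 2) s). pose proof (Rmin_r (z + d / 2) s).
    set (x := Rmin (z + d / 2) s) in *.
    assert (z < x) by (apply Rmin_glb_lt; lra).
    assert (HEx : E x).
    { split; [lra |]. intros t Ht. destruct (Rlt_or_le t z) as [Htz | Htz]; [apply Hbelow; lra |].
      apply Hnear. rewrite Rabs_pos_eq; lra. }
    specialize (Hub x HEx). lra.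
Qed.

Lemma neg_before_first_zero F a t : 0 < a ->
  (forall s, 0 < s -> continuity_pt F s) ->
  (forall s, 0 < s < a -> F s < 0) -> (forall s, 0 < s < t -> F s <> 0) ->
  forall s, 0 < s < t -> F s < 0.
Proof.
  intros Ha HF Hneg Hnz s Hs. apply Rnot_le_lt. intros Hge.
  destruct (first_zero_of_sign_change (fun x => - F x) a s Ha ltac:(lra))
    as [z [Hz [HFz _]]].
  - intros x Hx. apply continuity_pt_opp, HF, Hx.
  - intros x Hx. specialize (Hneg x Hx). lra.
  - lra.
  - apply (Hnz z); lra.
Qed.


Definition wronskian (F dF G dG : R -> R) (t : R) : R := dG t * F t - dF t * G t.

Lemma wronskian_deriv F dF G dG ddF ddG t :
  derivable_pt_lim F t (dF t) -> derivable_pt_lim dF t ddF ->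
  derivable_pt_lim G t (dG t) -> derivable_pt_lim dG t ddG ->
  derivable_pt_lim (wronskian F dF G dG) t (ddG * F t - ddF * G t).
Proof.
  intros HF HdF HG HdG.
  apply (derivable_pt_lim_eq_l _ _ _ _ (derivable_pt_lim_minus _ _ _ _ _
           (derivable_pt_lim_mult _ _ _ _ _ HdG HF) (derivable_pt_lim_mult _ _ _ _ _ HdF HG))).
  ring.
Qed.

Lemma wronskian_lim_0 F dF G dG :
  lim_at_0_right F 0 -> bounded_near_0 dF -> lim_at_0_right G 0 -> bounded_near_0 dG ->
  lim_at_0_right (wronskian F dF G dG) 0.
Proof.
  intros HF HdF HG HdG.
  pose proof (limit_minus _ _ _ _ _ _ (lim_at_0_right_mul_bounded _ _ HdG HF)
                (lim_at_0_right_mul_bounded _ _ HdF HG)) as H.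
  rewrite Rminus_0_r in H. exact H.
Qed.

Lemma nonneg_of_deriv_nonneg_lim_0 W dW t : 0 < t -> lim_at_0_right W 0 ->
  (forall s, 0 < s <= t -> derivable_pt_lim W s (dW s)) ->
  (forall s, 0 < s < t -> 0 <= dW s) -> 0 <= W t.
Proof.
  intros Ht HW HdW Hsign. apply Rnot_lt_le. intros Hneg.
  rewrite lim_at_0_right_spec in HW.
  destruct (HW (- W t) ltac:(lra)) as [d [Hd Hsmall]].
  pose proof (Rmin_l d t). pose proof (Rmin_r d t).
  assert (0 < Rmin d t) by (apply Rmin_pos; lra).
  set (s := Rmin d t / 2).
  specialize (Hsmall s ltac:(unfold s; lra)). rewrite Rminus_0_r in Hsmall.
  apply Rabs_def2 in Hsmall.
  assert (W s <= W t).
  { apply (nondecr_of_deriv_nonneg W dW); unfold s; [lra | intros c Hc .. ].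
    - apply HdW; lra.
    - apply Hsign; lra. }
  lra.
Qed.

Lemma pos_of_deriv_pos_lim_0 W dW t a : 0 < t -> 0 < a -> lim_at_0_right W 0 ->
  (forall s, 0 < s <= t -> derivable_pt_lim W s (dW s)) ->
  (forall s, 0 < s < t -> 0 <= dW s) -> (forall s, 0 < s < a -> 0 < dW s) -> 0 < W t.
Proof.
  intros Ht Ha HW HdW Hnonneg Hpos.
  pose proof (Rmin_l a t). pose proof (Rmin_r a t).
  assert (0 < Rmin a t) by (apply Rmin_pos; lra).
  set (b := Rmin a t) in *.
  assert (0 <= W (b / 2)).
  { apply (nonneg_of_deriv_nonneg_lim_0 W dW); [lra | exact HW | intros s Hs .. ].
    - apply HdW; lra.
    - apply Hnonneg; lra. }
  assert (W (b / 2) < W b).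
  { apply (incr_of_deriv_pos W dW); [lra | intros s Hs .. ].
    - apply HdW; lra.
    - apply Hpos; lra. }
  assert (W b <= W t).
  { apply (nondecr_of_deriv_nonneg W dW); [lra | intros s Hs .. ].
    - apply HdW; lra.
    - apply Hnonneg; lra. }
  lra.
Qed.

Definition neg_start_solution (a F dF : R -> R) : Prop :=
  (forall t, 0 < t -> derivable_pt_lim F t (dF t)) /\
  (forall t, 0 < t -> derivable_pt_lim dF t (a t * F t)) /\
  lim_at_0_right F 0 /\ bounded_near_0 dF /\
  exists t1, 0 < t1 /\ forall t, 0 < t < t1 -> F t < 0.

Lemma neg_start_of_F_solution Q eps F l : lim_at_0_right Q l -> F_solution Q eps F ->
  exists dF, neg_start_solution (fun t => eps - 3 * Q t ^ 2) F dF.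
Proof.
  intros HQ [dF [HF [HdF [F_0 dF_0]]]]. exists dF.
  assert (HF0 : lim_at_0_right F 0).
  { pose proof (lim_at_0_right_of_continuity F
                  (derivable_pt_lim_continuity_pt _ _ _ (HF 0 (Rle_refl 0)))) as H.
    rewrite F_0 in H. exact H. }
  assert (Hcoef : bounded_near_0 (fun t => eps - 3 * Q t ^ 2)).
  { apply (lim_at_0_right_bounded _ (eps - 3 * l ^ 2)).
    exact (limit_minus _ _ _ _ _ _ (limit_free (fun _ => eps) _ 0 0)
             (limit_mul _ _ _ _ _ _ (limit_free (fun _ => 3) _ 0 0) (limit_pow _ _ _ _ 2 HQ))). }
  split; [intros t Ht; apply HF; lra |]. split; [exact HdF |]. split; [exact HF0 |]. split.
  - apply (bounded_near_0_of_deriv dF (fun t => (eps - 3 * Q t ^ 2) * F t)); [exact HdF |].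
    exact (lim_at_0_right_bounded _ 0 (lim_at_0_right_mul_bounded _ _ Hcoef HF0)).
  - apply (neg_near_0_of_deriv_neg F (dF 0)); [exact F_0 | apply HF, Rle_refl | lra].
Qed.

Lemma neg_start_solution_first_zero a F dF : neg_start_solution a F dF ->
  (exists s, 0 < s /\ 0 < F s) -> exists te, first_pos_zero F te.
Proof.
  intros [HF [_ [_ [_ [t1 [Ht1 Hneg]]]]]] [s [Hs HFs]].
  destruct (first_zero_of_sign_change (fun t => - F t) t1 s Ht1 Hs) as [te [Hte [HFte Hbefore]]].
  - intros t Ht. exact (continuity_pt_opp _ _ (derivable_pt_lim_continuity_pt _ _ _ (HF t Ht))).
  - intros t Ht. specialize (Hneg t Ht). lra.
  - lra.
  - exists te. split; [lra |]. split; [lra |]. intros t Ht. specialize (Hbefore t Ht). lra.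
Qed.

Lemma sturm_comparison_first_zero a b F dF G dG te t0 :
  (forall t, 0 < t -> b t <= a t) ->
  neg_start_solution a F dF -> neg_start_solution b G dG ->
  first_pos_zero F te -> first_pos_zero G t0 -> t0 <= te.
Proof.
  intros Hab [HF [HdF [HF0 [HdFb [t1 [Ht1 HFneg]]]]]] [HG [HdG [HG0 [HdGb [t2 [Ht2 HGneg]]]]]]
    [Hte [HFte HFnz]] [Ht0 [HGt0 HGnz]].
  apply Rnot_lt_le. intros Hlt.
  assert (HFc : forall t, 0 < t -> continuity_pt F t)
    by (intros t Ht; exact (derivable_pt_lim_continuity_pt _ _ _ (HF t Ht))).
  assert (HGc : forall t, 0 < t -> continuity_pt G t)
    by (intros t Ht; exact (derivable_pt_lim_continuity_pt _ _ _ (HG t Ht))).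
  pose proof (neg_before_first_zero F t1 te Ht1 HFc HFneg HFnz) as HFbefore.
  assert (HGbefore : forall t, 0 < t <= te -> G t < 0)
    by (intros t Ht; apply (neg_before_first_zero G t2 t0 Ht2 HGc HGneg HGnz); lra).
  (* (F / G)' = V / G^2, and V' = (a - b) F G >= 0 with V(0+) = 0. *)
  set (V := wronskian G dG F dF).
  assert (HV : forall t, 0 < t <= te -> 0 <= V t).
  { intros t Ht. apply (nonneg_of_deriv_nonneg_lim_0 V (fun s => (a s - b s) * F s * G s));
      [lra | apply wronskian_lim_0; assumption | intros s Hs .. ].
    - apply (derivable_pt_lim_eq_l _ _ _ _ (wronskian_deriv G dG F dF _ _ s
               (HG s ltac:(lra)) (HdG s ltac:(lra)) (HF s ltac:(lra)) (HdF s ltac:(lra)))).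
      ring.
    - specialize (Hab s ltac:(lra)). specialize (HFbefore s ltac:(lra)).
      specialize (HGbefore s ltac:(lra)).
      assert (0 <= F s * G s) by nra. nra. }
  assert (Hratio : F (te / 2) / G (te / 2) <= F te / G te).
  { apply (nondecr_of_deriv_nonneg (fun t => F t / G t) (fun t => V t / (G t)²));
      [lra | intros s Hs .. ].
    - apply (derivable_pt_lim_div F G); [apply HF; lra | apply HG; lra |].
      specialize (HGbefore s ltac:(lra)). lra.
    - specialize (HGbefore s ltac:(lra)). specialize (HV s ltac:(lra)).
      unfold Rdiv. apply Rmult_le_pos; [exact HV |].
      left. apply Rinv_0_lt_compat, Rsqr_pos_lt. lra. }
  rewrite HFte in Hratio. unfold Rdiv in Hratio. rewrite Rmult_0_l in Hratio.
  specialize (HFbefore (te / 2) ltac:(lra)). specialize (HGbefore (te / 2) ltac:(lra)).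
  assert (/ G (te / 2) < 0) by (apply Rinv_lt_0_compat; lra).
  nra.
Qed.


Section Ground_state.

Variables Q dQ : R -> R.
Hypothesis Q_pos : forall t, 0 <= t -> 0 < Q t.
Hypothesis Q_deriv : forall t, 0 < t -> derivable_pt_lim Q t (dQ t).
Hypothesis dQ_deriv : forall t, 0 < t ->
  derivable_pt_lim dQ t (- (2 / t) * dQ t + Q t - Q t ^ 3).
Hypothesis Q_regular_0 : forall e, 0 < e -> exists d, 0 < d /\
  forall t, 0 < t < d -> Rabs (Q t - Q 0) < e /\ Rabs (dQ t) < e.
Hypothesis Q_decay : forall e, 0 < e -> exists M, forall t, M < t -> Rabs (Q t) < e.

Lemma Q_lim_0 : lim_at_0_right Q (Q 0).
Proof.
  apply lim_at_0_right_spec. intros e He. destruct (Q_regular_0 e He) as [d [Hd H]].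
  exists d. split; [exact Hd |]. intros t Ht. apply H, Ht.
Qed.

Lemma dQ_lim_0 : lim_at_0_right dQ 0.
Proof.
  apply lim_at_0_right_spec. intros e He. destruct (Q_regular_0 e He) as [d [Hd H]].
  exists d. split; [exact Hd |]. intros t Ht. rewrite Rminus_0_r. apply H, Ht.
Qed.

Lemma Q_cube_deriv t : 0 < t -> derivable_pt_lim (fun s => Q s ^ 3) t (3 * Q t ^ 2 * dQ t).
Proof.
  intros Ht.
  apply (derivable_pt_lim_eq_l _ _ _ _ (derivable_pt_lim_comp Q (fun y => y ^ 3) t _ _
           (Q_deriv t Ht) (derivable_pt_lim_pow (Q t) 3))).
  simpl. ring.
Qed.

Definition rQ (t : R) : R := Q t + t * dQ t.

Lemma tQ_deriv t : 0 < t -> derivable_pt_lim (fun s => s * Q s) t (rQ t).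
Proof.
  intros Ht.
  apply (derivable_pt_lim_eq_l _ _ _ _ (derivable_pt_lim_mult _ _ _ _ _
           (derivable_pt_lim_id t) (Q_deriv t Ht))).
  unfold rQ, id. ring.
Qed.

Lemma rQ_deriv t : 0 < t -> derivable_pt_lim rQ t (t * (Q t - Q t ^ 3)).
Proof.
  intros Ht.
  apply (derivable_pt_lim_eq_l _ _ _ _ (derivable_pt_lim_plus _ _ _ _ _ (Q_deriv t Ht)
           (derivable_pt_lim_mult _ _ _ _ _ (derivable_pt_lim_id t) (dQ_deriv t Ht)))).
  unfold id. field. lra.
Qed.

Lemma rQ_lim_0 : lim_at_0_right rQ (Q 0).
Proof.
  pose proof (limit_plus _ _ _ _ _ _ Q_lim_0
                (limit_mul _ _ _ _ _ _ (lim_x _ 0) dQ_lim_0)) as H.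
  rewrite Rmult_0_l, Rplus_0_r in H. exact H.
Qed.

(* If rQ stayed positive, tQ would increase, so rQ' = tQ (1 - Q^2) would stay above a
   constant c > 0 once Q < 1/2; then rQ >= 1 beyond some T, giving 2T Q(2T) > T. *)
Lemma rQ_nonpos_somewhere : exists s, 0 < s /\ rQ s <= 0.
Proof.
  apply NNPP. intros Hnone.
  assert (Hpos : forall t, 0 < t -> 0 < rQ t)
    by (intros t Ht; apply Rnot_le_lt; intros Hr; apply Hnone; exists t; auto).
  destruct (Q_decay (1 / 2) ltac:(lra)) as [M HM].
  set (b := Rabs M + 1).
  pose proof (Rle_abs M). pose proof (Rabs_pos M).
  assert (Hb : 0 < b) by (unfold b; lra).
  assert (HQsmall : forall t, b <= t -> Q t < 1 / 2).
  { intros t Ht. pose proof (HM t ltac:(unfold b in Ht; lra)) as HMt.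
    apply Rabs_def2 in HMt. lra. }
  assert (HtQ : forall t, b <= t -> b * Q b <= t * Q t).
  { intros t Ht. apply (nondecr_of_deriv_nonneg (fun s => s * Q s) rQ); [lra | intros s Hs .. ].
    - apply tQ_deriv; lra.
    - left; apply Hpos; lra. }
  pose proof (Q_pos b ltac:(lra)) as HQb.
  set (c := 3 / 4 * (b * Q b)).
  assert (Hc : 0 < c) by (unfold c; pose proof (Rmult_lt_0_compat _ _ Hb HQb); lra).
  assert (HrQ : forall t, b <= t -> rQ b + c * (t - b) <= rQ t).
  { intros t Ht.
    apply (deriv_lower_bound rQ (fun s => s * (Q s - Q s ^ 3))); [lra | intros s Hs .. ].
    - apply rQ_deriv; lra.
    - pose proof (HtQ s ltac:(lra)). pose proof (HQsmall s ltac:(lra)).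
      pose proof (Q_pos s ltac:(lra)).
      assert (H34 : 3 / 4 < 1 - Q s ^ 2) by nra.
      replace (s * (Q s - Q s ^ 3)) with (s * Q s * (1 - Q s ^ 2)) by ring.
      unfold c. pose proof (Rmult_lt_0_compat _ _ Hb HQb). nra. }
  set (T := b + 1 / c).
  assert (HcT : c * (T - b) = 1) by (unfold T; field; lra).
  assert (HbT : b < T) by (unfold T; pose proof (Rdiv_lt_0_compat 1 c Rlt_0_1 Hc); lra).
  assert (Hgrow : T * Q T + 1 * (2 * T - T) <= 2 * T * Q (2 * T)).
  { apply (deriv_lower_bound (fun s => s * Q s) rQ); [lra | intros s Hs .. ].
    - apply tQ_deriv; lra.
    - pose proof (HrQ s ltac:(lra)). pose proof (Hpos b Hb). nra. }
  pose proof (Q_pos T ltac:(lra)). pose proof (HQsmall (2 * T) ltac:(lra)). nra.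
Qed.

Lemma rQ_first_zero : exists z, 0 < z /\ rQ z = 0 /\ forall t, 0 < t < z -> 0 < rQ t.
Proof.
  destruct (limit1_in_pos_near _ _ _ _ rQ_lim_0 (Q_pos 0 (Rle_refl 0))) as [a [Ha Hnear]].
  destruct rQ_nonpos_somewhere as [s [Hs Hrs]].
  destruct (first_zero_of_sign_change rQ a s Ha Hs) as [z [Hz [Hrz Hbefore]]].
  - intros t Ht. exact (derivable_pt_lim_continuity_pt _ _ _ (rQ_deriv t Ht)).
  - intros t Ht. apply Hnear; [lra | rewrite Rminus_0_r, Rabs_pos_eq; lra].
  - exact Hrs.
  - exists z. split; [lra |]. split; assumption.
Qed.

(* pQ is the radial reduction t (1 + x.grad) Q of the generator of the scaling
   lambda Q (lambda x); differentiating the ground-state equation in lambda gives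
   pQ'' = (1 - 3 Q^2) pQ + 2 t Q. *)
Definition pQ (t : R) : R := t * rQ t.

Definition dpQ (t : R) : R := rQ t + t * (t * (Q t - Q t ^ 3)).

Lemma pQ_deriv t : 0 < t -> derivable_pt_lim pQ t (dpQ t).
Proof.
  intros Ht.
  apply (derivable_pt_lim_eq_l _ _ _ _ (derivable_pt_lim_mult _ _ _ _ _
           (derivable_pt_lim_id t) (rQ_deriv t Ht))).
  unfold dpQ, id. ring.
Qed.

Lemma dpQ_deriv t : 0 < t ->
  derivable_pt_lim dpQ t ((1 - 3 * Q t ^ 2) * pQ t + 2 * t * Q t).
Proof.
  intros Ht.
  pose proof (derivable_pt_lim_minus _ _ _ _ _ (Q_deriv t Ht) (Q_cube_deriv t Ht)) as HQ3.
  pose proof (derivable_pt_lim_mult _ _ _ _ _ (derivable_pt_lim_id t)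
                (derivable_pt_lim_mult _ _ _ _ _ (derivable_pt_lim_id t) HQ3)) as Htail.
  apply (derivable_pt_lim_eq_l _ _ _ _ (derivable_pt_lim_plus _ _ _ _ _ (rQ_deriv t Ht) Htail)).
  unfold pQ, rQ, mult_fct, minus_fct, id. ring.
Qed.

Lemma pQ_lim_0 : lim_at_0_right pQ 0.
Proof.
  pose proof (limit_mul _ _ _ _ _ _ (lim_x _ 0) rQ_lim_0) as H.
  rewrite Rmult_0_l in H. exact H.
Qed.

Lemma dpQ_bounded : bounded_near_0 dpQ.
Proof.
  apply (lim_at_0_right_bounded _ _ (limit_plus _ _ _ _ _ _ rQ_lim_0
           (limit_mul _ _ _ _ _ _ (lim_x _ 0) (limit_mul _ _ _ _ _ _ (lim_x _ 0)
              (limit_minus _ _ _ _ _ _ Q_lim_0 (limit_pow _ _ _ _ 3 Q_lim_0)))))).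
Qed.

Lemma neg_start_solution_changes_sign eps F dF : eps <= 1 ->
  neg_start_solution (fun t => eps - 3 * Q t ^ 2) F dF ->
  exists s, 0 < s /\ 0 < F s.
Proof.
  intros Heps [HF [HdF [HF0 [HdFb [t1 [Ht1 Hneg]]]]]].
  apply NNPP. intros Hnone.
  assert (Hnonpos : forall t, 0 < t -> F t <= 0)
    by (intros t Ht; apply Rnot_lt_le; intros HFt; apply Hnone; exists t; auto).
  destruct rQ_first_zero as [z [Hz [Hrz Hrpos]]].
  assert (HpQpos : forall t, 0 < t < z -> 0 < pQ t)
    by (intros t Ht; apply Rmult_lt_0_compat; [lra | apply Hrpos, Ht]).
  assert (Hsource : forall t, 0 < t < z -> 0 < (1 - eps) * pQ t + 2 * t * Q t).
  { intros t Ht. pose proof (HpQpos t Ht). pose proof (Q_pos t ltac:(lra)).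
    assert (0 <= (1 - eps) * pQ t) by (apply Rmult_le_pos; lra). nra. }
  set (W := wronskian F dF pQ dpQ).
  assert (HWz : 0 < - W z).
  { apply (pos_of_deriv_pos_lim_0 (fun t => - W t)
             (fun t => - (F t * ((1 - eps) * pQ t + 2 * t * Q t))) z (Rmin t1 z));
      [exact Hz | apply Rmin_pos; lra | | intros s Hs .. ].
    - pose proof (limit_Ropp _ _ _ _ (wronskian_lim_0 F dF pQ dpQ HF0 HdFb pQ_lim_0 dpQ_bounded))
        as H.
      rewrite Ropp_0 in H. exact H.
    - apply derivable_pt_lim_opp.
      apply (derivable_pt_lim_eq_l _ _ _ _ (wronskian_deriv F dF pQ dpQ _ _ s
               (HF s ltac:(lra)) (HdF s ltac:(lra)) (pQ_deriv s ltac:(lra))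
               (dpQ_deriv s ltac:(lra)))).
      ring.
    - pose proof (Hsource s Hs). pose proof (Hnonpos s ltac:(lra)). nra.
    - pose proof (Rmin_l t1 z). pose proof (Rmin_r t1 z).
      pose proof (Hsource s ltac:(lra)). pose proof (Hneg s ltac:(lra)). nra. }
  assert (HpQz : pQ z = 0) by (unfold pQ; rewrite Hrz; ring).
  assert (HdpQz : dpQ z <= 0)
    by exact (deriv_nonpos_at_first_zero pQ z _ Hz (pQ_deriv z Hz) HpQz HpQpos).
  pose proof (Hnonpos z Hz).
  unfold W, wronskian in HWz. rewrite HpQz in HWz. nra.
Qed.

End Ground_state.

Theorem lemma6p1 (Q : R -> R) (eps : R) (F F0 : R -> R) :
  ground_state_profile Q ->
  0 <= eps <= 1 ->
  F_solution Q eps F ->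
  F_solution Q 0 F0 ->
  (exists s, 0 < s /\ 0 < F s) /\
  (exists te, first_pos_zero F te) /\
  (forall te t0, first_pos_zero F te -> first_pos_zero F0 t0 ->
     0 < t0 <= te).
Proof.
  intros [Q_pos [dQ [Q_deriv [dQ_deriv [Q_regular_0 Q_decay]]]]] [eps_ge0 eps_le1] HF HF0.
  pose proof (Q_lim_0 Q dQ Q_regular_0) as HQ0.
  destruct (neg_start_of_F_solution Q eps F _ HQ0 HF) as [dF HsolF].
  destruct (neg_start_of_F_solution Q 0 F0 _ HQ0 HF0) as [dF0 HsolF0].
  assert (Hsign : exists s, 0 < s /\ 0 < F s)
    by exact (neg_start_solution_changes_sign Q dQ Q_pos Q_deriv dQ_deriv Q_regular_0 Q_decay
                eps F dF eps_le1 HsolF).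
  split; [exact Hsign |]. split; [exact (neg_start_solution_first_zero _ _ _ HsolF Hsign) |].
  intros te t0 Hte Ht0. split; [apply Ht0 |].
  refine (sturm_comparison_first_zero _ _ _ _ _ _ te t0 _ HsolF HsolF0 Hte Ht0).
  intros t _. lra.
Qed.
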